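(* Let $X$ and $Y$ be infinite dimensional Banach spaces that are essentially incomparable. Then no compact operator $S\in B(Y)$ is equivalent after extension to any operator $T\in B(X)$.
   Context: All Banach spaces are complex; $B(X,Y)$ denotes bounded linear operators; invertibility means bounded inverse; $X\oplus Y$ is the $\ell^2$-direct sum and $\mathrm{id}_X$ the identity. Operators $T\in B(X)$ and $S\in B(Y)$ are equivalent after extension if there exist Banach spaces $X'$, $Y'$ and invertible $E\in B(Y\oplus Y',X\oplus X')$, $F\in B(X\oplus X',Y\oplus Y')$ with $\begin{bmatrix}T&0\\0&\mathrm{id}_{X'}\end{bmatrix}=E\begin{bmatrix}S&0\\0&\mathrm{id}_{Y'}\end{bmatrix}F$. An operator $S\in B(X,Y)$ is inessential if $\mathrm{id}_X-TS$ is Fredholm for every $T\in B(Y,X)$; $\mathcal J(X,Y)$ denotes the set of inessential operators in $B(X,Y)$. The spaces $X$ and $Y$ are essentially incomparable if $B(X,Y)=\mathcal J(X,Y)$ (equivalently, $B(Y,X)=\mathcal J(Y,X)$). *)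

From Stdlib Require Import Reals List.
Open Scope R_scope.

Definition C : Type := (R * R)%type.
Definition C0 : C := (0, 0).
Definition C1 : C := (1, 0).
Definition Cadd (a b : C) : C := (fst a + fst b, snd a + snd b).
Definition Cmul (a b : C) : C :=
  (fst a * fst b - snd a * snd b, fst a * snd b + snd a * fst b).
Definition Copp (a : C) : C := (- fst a, - snd a).
Definition Cmod (a : C) : R := sqrt (fst a ^ 2 + snd a ^ 2).

(** A "pre-normed" complex space: carrier with vector operations and a norm
    function, no axioms.  Axioms are imposed by [Banach] below. *)
Record NSpace := {
  car :> Type;
  vzero : car;
  vadd : car -> car -> car;
  vopp : car -> car;
  vscal : C -> car -> car;
  vnorm : car -> R }.

Arguments vzero {_}.
Arguments vadd {_} _ _.
Arguments vopp {_} _.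
Arguments vscal {_} _ _.
Arguments vnorm {_} _.

Definition vsub {X : NSpace} (x y : X) : X := vadd x (vopp y).

Definition cauchy {X : NSpace} (u : nat -> X) : Prop :=
  forall eps, 0 < eps -> exists N, forall m n, (N <= m)%nat -> (N <= n)%nat ->
    vnorm (vsub (u m) (u n)) < eps.

Definition converges_to {X : NSpace} (u : nat -> X) (l : X) : Prop :=
  forall eps, 0 < eps -> exists N, forall n, (N <= n)%nat -> vnorm (vsub (u n) l) < eps.

Definition Banach (X : NSpace) : Prop :=
  (forall x y z : X, vadd x (vadd y z) = vadd (vadd x y) z) /\
  (forall x y : X, vadd x y = vadd y x) /\
  (forall x : X, vadd x vzero = x) /\
  (forall x : X, vadd x (vopp x) = vzero) /\
  (forall (a : C) (x y : X), vscal a (vadd x y) = vadd (vscal a x) (vscal a y)) /\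
  (forall (a b : C) (x : X), vscal (Cadd a b) x = vadd (vscal a x) (vscal b x)) /\
  (forall (a b : C) (x : X), vscal (Cmul a b) x = vscal a (vscal b x)) /\
  (forall x : X, vscal C1 x = x) /\
  (forall x : X, vnorm x = 0 -> x = vzero) /\
  (forall x y : X, vnorm (vadd x y) <= vnorm x + vnorm y) /\
  (forall (a : C) (x : X), vnorm (vscal a x) = Cmod a * vnorm x) /\
  (forall u : nat -> X, cauchy u -> exists l, converges_to u l).

Definition lincomb {X : NSpace} (cs : list C) (vs : list X) : X :=
  fold_right (fun p acc => vadd (vscal (fst p) (snd p)) acc) vzero (combine cs vs).

Definition finite_dim_sub {X : NSpace} (S : X -> Prop) : Prop :=
  exists vs : list X, Forall S vs /\
    forall x, S x -> exists cs : list C, x = lincomb cs vs.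

Definition infinite_dim (X : NSpace) : Prop := ~ finite_dim_sub (fun _ : X => True).

Definition is_linear {X Y : NSpace} (f : X -> Y) : Prop :=
  (forall x y, f (vadd x y) = vadd (f x) (f y)) /\
  (forall (a : C) x, f (vscal a x) = vscal a (f x)).

Definition is_bounded {X Y : NSpace} (f : X -> Y) : Prop :=
  exists M, forall x, vnorm (f x) <= M * vnorm x.

Definition bop {X Y : NSpace} (f : X -> Y) : Prop := is_linear f /\ is_bounded f.

Definition invertible {X Y : NSpace} (f : X -> Y) : Prop :=
  bop f /\ exists g : Y -> X, bop g /\ (forall y, f (g y) = y) /\ (forall x, g (f x) = x).

Definition closed_range {X Y : NSpace} (f : X -> Y) : Prop :=
  forall (u : nat -> X) (y : Y), converges_to (fun n => f (u n)) y -> exists x, f x = y.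

Definition finite_codim_range {X Y : NSpace} (f : X -> Y) : Prop :=
  exists vs : list Y, forall y, exists x cs, y = vadd (f x) (lincomb cs vs).

Definition fredholm {X Y : NSpace} (f : X -> Y) : Prop :=
  bop f /\ finite_dim_sub (fun x => f x = vzero) /\ closed_range f /\
  finite_codim_range f.

Definition inessential {X Y : NSpace} (S : X -> Y) : Prop :=
  bop S /\ forall T : Y -> X, bop T -> fredholm (fun x => vsub x (T (S x))).

Definition ess_incomparable (X Y : NSpace) : Prop :=
  forall S : X -> Y, bop S -> inessential S.

Definition compact_op {X Y : NSpace} (S : X -> Y) : Prop :=
  bop S /\ forall u : nat -> X, (exists M, forall n, vnorm (u n) <= M) ->
    exists (phi : nat -> nat) (l : Y),
      (forall n, (phi n < phi (Nat.succ n))%nat) /\ converges_to (fun n => S (u (phi n))) l.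

Definition dsum (X Y : NSpace) : NSpace := {|
  car := (car X * car Y)%type;
  vzero := (vzero, vzero);
  vadd := fun p q => (vadd (fst p) (fst q), vadd (snd p) (snd q));
  vopp := fun p => (vopp (fst p), vopp (snd p));
  vscal := fun a p => (vscal a (fst p), vscal a (snd p));
  vnorm := fun p => sqrt (vnorm (fst p) ^ 2 + vnorm (snd p) ^ 2) |}.

Definition diag_id {X : NSpace} (X' : NSpace) (T : X -> X) : dsum X X' -> dsum X X' :=
  fun p => (T (fst p), snd p).

Definition equiv_after_ext {X Y : NSpace} (T : X -> X) (S : Y -> Y) : Prop :=
  exists (X' Y' : NSpace), Banach X' /\ Banach Y' /\
    exists (E : dsum Y Y' -> dsum X X') (F : dsum X X' -> dsum Y Y'),
      invertible E /\ invertible F /\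
      forall p : dsum X X', diag_id X' T p = E (diag_id Y' S (F p)).

(* Unwinding [diag T 1 = E (diag S 1) F] yields bounded [A : X -> Y], [B : Y -> X]
   and [L] with [id_Y = A B + L S], where [K := L S] is compact.  Essential
   incomparability makes [id_X - B A] Fredholm; having closed range it is, by the
   open mapping argument, bounded below modulo its finite-dimensional kernel [N],
   so every [y] lies within [M |K y|] of the finite-dimensional space [A N].  By
   Riesz's lemma the infinite-dimensional [Y] contains a bounded sequence whose
   differences stay [1/2] away from [A N], whereas a subsequence of its [K]-images
   converges: a contradiction. *)

From Stdlib Require Import Reals List Lra Lia ZArith ClassicalEpsilon Classical.
Open Scope R_scope.

(** * Vector space identities *)

Section VectorSpace.

Context {X : NSpace} (HX : Banach X).

Lemma vadd_assoc (x y z : X) : vadd x (vadd y z) = vadd (vadd x y) z.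
Proof. destruct HX as (H & _); apply H. Qed.

Lemma vadd_comm (x y : X) : vadd x y = vadd y x.
Proof. destruct HX as (_ & H & _); apply H. Qed.

Lemma vadd_0_r (x : X) : vadd x vzero = x.
Proof. destruct HX as (_ & _ & H & _); apply H. Qed.

Lemma vadd_opp_r (x : X) : vadd x (vopp x) = vzero.
Proof. destruct HX as (_ & _ & _ & H & _); apply H. Qed.

Lemma vscal_add_r a (x y : X) : vscal a (vadd x y) = vadd (vscal a x) (vscal a y).
Proof. destruct HX as (_ & _ & _ & _ & H & _); apply H. Qed.

Lemma vscal_add_l a b (x : X) : vscal (Cadd a b) x = vadd (vscal a x) (vscal b x).
Proof. destruct HX as (_ & _ & _ & _ & _ & H & _); apply H. Qed.

Lemma vscal_mul a b (x : X) : vscal (Cmul a b) x = vscal a (vscal b x).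
Proof. destruct HX as (_ & _ & _ & _ & _ & _ & H & _); apply H. Qed.

Lemma vscal_1 (x : X) : vscal C1 x = x.
Proof. destruct HX as (_ & _ & _ & _ & _ & _ & _ & H & _); apply H. Qed.

Lemma vnorm_eq_0 (x : X) : vnorm x = 0 -> x = vzero.
Proof. destruct HX as (_ & _ & _ & _ & _ & _ & _ & _ & H & _); apply H. Qed.

Lemma vnorm_triangle (x y : X) : vnorm (vadd x y) <= vnorm x + vnorm y.
Proof. destruct HX as (_ & _ & _ & _ & _ & _ & _ & _ & _ & H & _); apply H. Qed.

Lemma vnorm_scal a (x : X) : vnorm (vscal a x) = Cmod a * vnorm x.
Proof. destruct HX as (_ & _ & _ & _ & _ & _ & _ & _ & _ & _ & H & _); apply H. Qed.

Lemma banach_complete (u : nat -> X) : cauchy u -> exists l, converges_to u l.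
Proof. destruct HX as (_ & _ & _ & _ & _ & _ & _ & _ & _ & _ & _ & H); apply H. Qed.

Lemma vadd_0_l (x : X) : vadd vzero x = x.
Proof. rewrite vadd_comm; apply vadd_0_r. Qed.

Lemma vadd_reg_l (x y z : X) : vadd x y = vadd x z -> y = z.
Proof.
  intro H. apply (f_equal (vadd (vopp x))) in H.
  rewrite !vadd_assoc, (vadd_comm (vopp x)), vadd_opp_r, !vadd_0_l in H. exact H.
Qed.

Lemma vopp_unique (x y : X) : vadd x y = vzero -> y = vopp x.
Proof. intro H. apply (vadd_reg_l x). rewrite H, vadd_opp_r. reflexivity. Qed.

Lemma vopp_involutive (x : X) : vopp (vopp x) = x.
Proof. symmetry. apply vopp_unique. rewrite vadd_comm. apply vadd_opp_r. Qed.

Lemma vopp_0 : vopp (@vzero X) = vzero.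
Proof. symmetry. apply vopp_unique, vadd_0_r. Qed.

Lemma vopp_add (x y : X) : vopp (vadd x y) = vadd (vopp x) (vopp y).
Proof.
  symmetry. apply vopp_unique.
  rewrite <- vadd_assoc, (vadd_assoc y), (vadd_comm y), <- vadd_assoc, vadd_opp_r, vadd_0_r.
  apply vadd_opp_r.
Qed.

Lemma vscal_0_l (x : X) : vscal C0 x = vzero.
Proof.
  apply (vadd_reg_l (vscal C0 x)). rewrite vadd_0_r, <- vscal_add_l.
  f_equal. unfold C0, Cadd; simpl; f_equal; ring.
Qed.

Lemma vscal_0_r a : vscal a (@vzero X) = vzero.
Proof. apply (vadd_reg_l (vscal a vzero)). rewrite vadd_0_r, <- vscal_add_r, vadd_0_r. reflexivity. Qed.

Lemma vscal_opp_1 (x : X) : vscal (Copp C1) x = vopp x.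
Proof.
  apply vopp_unique. rewrite <- (vscal_1 x) at 1. rewrite <- vscal_add_l.
  replace (Cadd C1 (Copp C1)) with C0 by (unfold C0, C1, Cadd, Copp; simpl; f_equal; ring).
  apply vscal_0_l.
Qed.

Lemma vscal_opp_l a (x : X) : vscal (Copp a) x = vopp (vscal a x).
Proof.
  replace (Copp a) with (Cmul (Copp C1) a) by (destruct a; unfold Cmul, Copp, C1; simpl; f_equal; ring).
  rewrite vscal_mul. apply vscal_opp_1.
Qed.

Lemma vscal_opp_r a (x : X) : vscal a (vopp x) = vopp (vscal a x).
Proof.
  rewrite <- (vscal_opp_1 x), <- vscal_mul, <- vscal_opp_l. f_equal.
  destruct a; unfold Cmul, Copp, C1; simpl; f_equal; ring.
Qed.

Lemma vscal_sub_r a (x y : X) : vscal a (vsub x y) = vsub (vscal a x) (vscal a y).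
Proof. unfold vsub. rewrite vscal_add_r, vscal_opp_r. reflexivity. Qed.

End VectorSpace.

(* Abelian-group identities are decided by reflection: both sides are reified
   over a list of atoms and normalised to vectors of integer coefficients. *)
Inductive aexpr := AAtom (n : nat) | AZero | AAdd (a b : aexpr) | AOpp (a : aexpr).

Fixpoint aeval {X : NSpace} (env : list X) (e : aexpr) : X :=
  match e with
  | AAtom n => nth n env vzero
  | AZero => vzero
  | AAdd a b => vadd (aeval env a) (aeval env b)
  | AOpp a => vopp (aeval env a)
  end.

Fixpoint zlist_add (l1 l2 : list Z) : list Z :=
  match l1, l2 with
  | a :: l1', b :: l2' => (a + b)%Z :: zlist_add l1' l2'
  | nil, l => l
  | l, nil => l
  end.

Fixpoint zlist_unit (n : nat) : list Z :=
  match n with O => 1%Z :: nil | S n => 0%Z :: zlist_unit n end.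

Fixpoint acoeffs (e : aexpr) : list Z :=
  match e with
  | AAtom n => zlist_unit n
  | AZero => nil
  | AAdd a b => zlist_add (acoeffs a) (acoeffs b)
  | AOpp a => map Z.opp (acoeffs a)
  end.

Definition RtoC (t : R) : C := (t, 0).

Fixpoint zcombine {X : NSpace} (env : list X) (zs : list Z) : X :=
  match env, zs with
  | v :: env', z :: zs' => vadd (vscal (RtoC (IZR z)) v) (zcombine env' zs')
  | _, _ => vzero
  end.

Section Reflection.

Context {X : NSpace} (HX : Banach X).

Lemma zcombine_nil (env : list X) : zcombine env nil = vzero.
Proof. destruct env; reflexivity. Qed.

Lemma zcombine_add (env : list X) : forall l1 l2,
  zcombine env (zlist_add l1 l2) = vadd (zcombine env l1) (zcombine env l2).
Proof.
  induction env as [|v env IH]; intros [|a l1] [|b l2]; simpl;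
    rewrite ?(vadd_0_r HX), ?(vadd_0_l HX); try reflexivity.
  rewrite IH, plus_IZR.
  replace (RtoC (IZR a + IZR b)) with (Cadd (RtoC (IZR a)) (RtoC (IZR b)))
    by (unfold Cadd, RtoC; simpl; f_equal; ring).
  rewrite (vscal_add_l HX), <- !(vadd_assoc HX). f_equal.
  rewrite !(vadd_assoc HX). f_equal. apply (vadd_comm HX).
Qed.

Lemma zcombine_opp (env : list X) : forall l,
  zcombine env (map Z.opp l) = vopp (zcombine env l).
Proof.
  induction env as [|v env IH]; intros [|a l]; simpl; try (symmetry; apply (vopp_0 HX)).
  rewrite IH, (vopp_add HX), <- (vscal_opp_l HX), opp_IZR. do 2 f_equal.
  unfold Copp, RtoC; simpl; f_equal; ring.
Qed.

Lemma zcombine_unit (env : list X) : forall n, zcombine env (zlist_unit n) = nth n env vzero.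
Proof.
  induction env as [|v env IH]; intros [|n]; simpl; try reflexivity.
  - rewrite zcombine_nil, (vadd_0_r HX). apply (vscal_1 HX).
  - rewrite IH. change (RtoC (IZR 0)) with C0. rewrite (vscal_0_l HX). apply (vadd_0_l HX).
Qed.

Lemma aeval_acoeffs (env : list X) e : aeval env e = zcombine env (acoeffs e).
Proof.
  induction e; simpl.
  - symmetry; apply zcombine_unit.
  - symmetry; apply zcombine_nil.
  - rewrite zcombine_add, IHe1, IHe2. reflexivity.
  - rewrite zcombine_opp, IHe. reflexivity.
Qed.

Lemma zcombine_zeros (env : list X) : forall l,
  forallb (Z.eqb 0) l = true -> zcombine env l = vzero.
Proof.
  induction env as [|v env IH]; intros [|a l] H; simpl; try reflexivity.
  simpl in H. apply andb_prop in H as [Ha Hl]. destruct a; try discriminate.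
  rewrite IH by exact Hl. change (RtoC (IZR 0)) with C0.
  rewrite (vscal_0_l HX). apply (vadd_0_r HX).
Qed.

Lemma aeval_eq (env : list X) e1 e2 :
  forallb (Z.eqb 0) (zlist_add (acoeffs e1) (map Z.opp (acoeffs e2))) = true ->
  aeval env e1 = aeval env e2.
Proof.
  intro H. pose proof (zcombine_zeros env _ H) as H0.
  rewrite zcombine_add, zcombine_opp, <- !aeval_acoeffs in H0.
  apply (vopp_unique HX), (f_equal vopp) in H0. rewrite !(vopp_involutive HX) in H0. symmetry. exact H0.
Qed.

End Reflection.

Ltac add_atom x l :=
  match l with
  | context [cons x _] => l
  | _ => constr:(cons x l)
  end.

Ltac collect_atoms t l :=
  match t with
  | vadd ?a ?b => let l := collect_atoms a l in collect_atoms b l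
  | vsub ?a ?b => let l := collect_atoms a l in collect_atoms b l
  | vopp ?a => collect_atoms a l
  | vzero => l
  | _ => add_atom t l
  end.

Ltac atom_index x l :=
  match l with
  | cons x _ => constr:(O)
  | cons _ ?l' => let n := atom_index x l' in constr:(S n)
  end.

Ltac reify t l :=
  match t with
  | vadd ?a ?b => let ra := reify a l in let rb := reify b l in constr:(AAdd ra rb)
  | vsub ?a ?b => let ra := reify a l in let rb := reify b l in constr:(AAdd ra (AOpp rb))
  | vopp ?a => let ra := reify a l in constr:(AOpp ra)
  | vzero => constr:(AZero)
  | _ => let n := atom_index t l in constr:(AAtom n)
  end.

Ltac abel HX :=
  match goal with
  | |- @eq ?T ?lhs ?rhs =>
    let l := collect_atoms lhs (@nil T) in
    let l := collect_atoms rhs l in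
    let r1 := reify lhs l in
    let r2 := reify rhs l in
    change (aeval l r1 = aeval l r2);
    apply (aeval_eq HX); vm_compute; reflexivity
  end.

Lemma Cmod_C0 : Cmod C0 = 0.
Proof. unfold Cmod, C0, fst, snd. replace (0 ^ 2 + 0 ^ 2) with 0 by ring. apply sqrt_0. Qed.

Lemma Cmod_C1 : Cmod C1 = 1.
Proof. unfold Cmod, C1, fst, snd. replace (1 ^ 2 + 0 ^ 2) with 1 by ring. apply sqrt_1. Qed.

Lemma Cmod_ge_0 a : 0 <= Cmod a.
Proof. apply sqrt_pos. Qed.

Lemma Cmod_RtoC t : Cmod (RtoC t) = Rabs t.
Proof.
  unfold Cmod, RtoC, fst, snd. rewrite <- sqrt_Rsqr_abs. f_equal. unfold Rsqr. ring.
Qed.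

Lemma Cmod_opp a : Cmod (Copp a) = Cmod a.
Proof. destruct a; unfold Cmod, Copp, fst, snd. f_equal. ring. Qed.

Lemma RtoC_mult a b : Cmul (RtoC a) (RtoC b) = RtoC (a * b).
Proof. unfold Cmul, RtoC; simpl; f_equal; ring. Qed.

Section Norm.

Context {X : NSpace} (HX : Banach X).

Lemma vnorm_0 : vnorm (@vzero X) = 0.
Proof. rewrite <- (vscal_0_l HX vzero), (vnorm_scal HX), Cmod_C0. ring. Qed.

Lemma vnorm_opp (x : X) : vnorm (vopp x) = vnorm x.
Proof. rewrite <- (vscal_opp_1 HX), (vnorm_scal HX), Cmod_opp, Cmod_C1. ring. Qed.

Lemma vnorm_ge_0 (x : X) : 0 <= vnorm x.
Proof.
  pose proof (vnorm_triangle HX x (vopp x)) as H.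
  rewrite (vadd_opp_r HX), vnorm_0, vnorm_opp in H. lra.
Qed.

Lemma vnorm_scal_RtoC t (x : X) : vnorm (vscal (RtoC t) x) = Rabs t * vnorm x.
Proof. rewrite (vnorm_scal HX), Cmod_RtoC. reflexivity. Qed.

Lemma vsub_diag (x : X) : vsub x x = vzero.
Proof. abel HX. Qed.

Lemma vnorm_sub_sym (x y : X) : vnorm (vsub x y) = vnorm (vsub y x).
Proof. rewrite <- vnorm_opp. f_equal. abel HX. Qed.

Lemma vnorm_sub_triangle (x y z : X) : vnorm (vsub x z) <= vnorm (vsub x y) + vnorm (vsub y z).
Proof. replace (vsub x z) with (vadd (vsub x y) (vsub y z)) by abel HX. apply (vnorm_triangle HX). Qed.

Lemma vnorm_sub_le (x y : X) : vnorm (vsub x y) <= vnorm x + vnorm y.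
Proof. unfold vsub. rewrite <- (vnorm_opp y). apply (vnorm_triangle HX). Qed.

Lemma vsub_eq_0 (x y : X) : vnorm (vsub x y) = 0 -> x = y.
Proof.
  intro H. apply (vnorm_eq_0 HX), (vopp_unique HX), (f_equal vopp) in H.
  rewrite !(vopp_involutive HX) in H. symmetry. exact H.
Qed.

End Norm.

Section Operators.

Context {X Y : NSpace} (HX : Banach X) (HY : Banach Y).

Lemma linear_add (f : X -> Y) : is_linear f -> forall x y, f (vadd x y) = vadd (f x) (f y).
Proof. intros [H _]; exact H. Qed.

Lemma linear_scal (f : X -> Y) : is_linear f -> forall a x, f (vscal a x) = vscal a (f x).
Proof. intros [_ H]; exact H. Qed.

Lemma linear_0 (f : X -> Y) : is_linear f -> f vzero = vzero.
Proof. intro H. rewrite <- (vscal_0_l HX vzero), (linear_scal f H). apply (vscal_0_l HY). Qed.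

Lemma linear_sub (f : X -> Y) : is_linear f -> forall x y, f (vsub x y) = vsub (f x) (f y).
Proof.
  intros H x y. unfold vsub.
  rewrite (linear_add f H), <- (vscal_opp_1 HX), (linear_scal f H), (vscal_opp_1 HY). reflexivity.
Qed.

Lemma bop_bound (f : X -> Y) : bop f -> exists M, 0 <= M /\ forall x, vnorm (f x) <= M * vnorm x.
Proof.
  intros [_ [M HM]]. exists (Rabs M). split; [apply Rabs_pos|]. intro x.
  eapply Rle_trans; [apply HM|]. apply Rmult_le_compat_r; [apply (vnorm_ge_0 HX)|apply RRle_abs].
Qed.

Lemma bop_continuous (f : X -> Y) (u : nat -> X) l :
  bop f -> converges_to u l -> converges_to (fun n => f (u n)) (f l).
Proof.
  intros Hf Hu eps Heps. destruct (bop_bound f Hf) as [M [HM0 HM]].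
  destruct (Hu (eps / (M + 1))) as [N HN]; [apply Rdiv_lt_0_compat; lra|].
  exists N. intros n Hn. rewrite <- (linear_sub f (proj1 Hf)).
  eapply Rle_lt_trans; [apply HM|].
  specialize (HN n Hn). pose proof (vnorm_ge_0 HX (vsub (u n) l)).
  apply Rle_lt_trans with ((M + 1) * vnorm (vsub (u n) l)); [nra|].
  replace eps with ((M + 1) * (eps / (M + 1))) by (field; lra).
  apply Rmult_lt_compat_l; lra.
Qed.

End Operators.

Lemma bop_comp {X Y Z : NSpace} (f : X -> Y) (g : Y -> Z) :
  (forall y : Y, 0 <= vnorm y) -> bop f -> bop g -> bop (fun x => g (f x)).
Proof.
  intros Hnorm [[fa fs] [Mf HMf]] [[ga gs] [Mg HMg]]. split; [split|].
  - intros x y. rewrite fa, ga. reflexivity.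
  - intros a x. rewrite fs, gs. reflexivity.
  - exists (Rabs Mg * Mf). intro x. eapply Rle_trans; [apply HMg|].
    eapply Rle_trans; [apply Rmult_le_compat_r; [apply Hnorm|apply RRle_abs]|].
    rewrite Rmult_assoc. apply Rmult_le_compat_l; [apply Rabs_pos|apply HMf].
Qed.

Section Limits.

Context {X : NSpace} (HX : Banach X).

Lemma limit_unique (u : nat -> X) l1 l2 : converges_to u l1 -> converges_to u l2 -> l1 = l2.
Proof.
  intros H1 H2. apply (vsub_eq_0 HX).
  pose proof (vnorm_ge_0 HX (vsub l1 l2)) as G.
  destruct (Rle_lt_or_eq_dec _ _ G) as [Hd|Hd]; [exfalso|auto].
  set (d := vnorm (vsub l1 l2)) in *.
  destruct (H1 (d / 2)) as [N1 HN1]; [lra|]. destruct (H2 (d / 2)) as [N2 HN2]; [lra|].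
  specialize (HN1 (max N1 N2) (Nat.le_max_l _ _)). specialize (HN2 (max N1 N2) (Nat.le_max_r _ _)).
  pose proof (vnorm_sub_triangle HX l1 (u (max N1 N2)) l2).
  rewrite (vnorm_sub_sym HX l1 (u _)) in H. unfold d in *. lra.
Qed.

Lemma limit_dist_le (u : nat -> X) l z c N :
  (forall n, (N <= n)%nat -> vnorm (vsub (u n) z) <= c) -> converges_to u l -> vnorm (vsub l z) <= c.
Proof.
  intros Hb Hl. apply Rnot_lt_le. intro Hc.
  destruct (Hl (vnorm (vsub l z) - c)) as [N' HN]; [lra|].
  specialize (HN (max N N') (Nat.le_max_r _ _)). specialize (Hb (max N N') (Nat.le_max_l _ _)).
  pose proof (vnorm_sub_triangle HX l (u (max N N')) z).
  rewrite (vnorm_sub_sym HX l (u _)) in H. lra.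
Qed.

Lemma limit_norm_le (u : nat -> X) l c :
  (forall n, vnorm (u n) <= c) -> converges_to u l -> vnorm l <= c.
Proof.
  intros Hb Hl. replace l with (vsub l vzero) by abel HX.
  apply (limit_dist_le u l vzero c O); auto.
  intros n _. replace (vsub (u n) vzero) with (u n) by abel HX. apply Hb.
Qed.

End Limits.

Lemma inv_INR_small (eps : R) : 0 < eps -> exists N : nat, forall n, (N <= n)%nat -> / (INR n + 1) < eps.
Proof.
  intro He. destruct (INR_unbounded (/ eps)) as [N HN]. exists N. intros n Hn.
  apply le_INR in Hn. pose proof (pos_INR N). rewrite <- (Rinv_inv eps). apply Rinv_lt_contravar.
  - apply Rmult_lt_0_compat; [apply Rinv_0_lt_compat|]; lra.
  - lra.
Qed.

Lemma pow_half_small (eps : R) : 0 < eps -> exists N : nat, forall n, (N <= n)%nat -> (/2) ^ n < eps.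
Proof.
  intro He. destruct (pow_lt_1_zero (/2)) with (y := eps) as [N HN]; auto.
  - rewrite Rabs_pos_eq; lra.
  - exists N. intros n Hn. specialize (HN n Hn). rewrite Rabs_pos_eq in HN; auto.
    apply pow_le; lra.
Qed.

(** * Finite-dimensional subspaces *)

Fixpoint in_span {X : NSpace} (l : list X) (y : X) : Prop :=
  match l with
  | nil => y = vzero
  | v :: l' => exists c w, in_span l' w /\ y = vadd (vscal c v) w
  end.

Definition is_closed {X : NSpace} (W : X -> Prop) : Prop :=
  forall (u : nat -> X) y, (forall n, W (u n)) -> converges_to u y -> W y.

Section Span.

Context {X : NSpace} (HX : Banach X).

Lemma in_span_0 (l : list X) : in_span l vzero.
Proof.
  induction l as [|v l IH]; simpl; auto.
  exists C0, vzero. split; auto. rewrite (vscal_0_l HX). symmetry. apply (vadd_0_r HX).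
Qed.

Lemma in_span_add (l : list X) : forall x y, in_span l x -> in_span l y -> in_span l (vadd x y).
Proof.
  induction l as [|v l IH]; simpl; intros x y Hx Hy.
  - subst. apply (vadd_0_r HX).
  - destruct Hx as [c [w [Hw ->]]]. destruct Hy as [c' [w' [Hw' ->]]].
    exists (Cadd c c'), (vadd w w'). split; auto. rewrite (vscal_add_l HX). abel HX.
Qed.

Lemma in_span_scal (l : list X) : forall a x, in_span l x -> in_span l (vscal a x).
Proof.
  induction l as [|v l IH]; simpl; intros a x Hx.
  - subst. apply (vscal_0_r HX).
  - destruct Hx as [c [w [Hw ->]]]. exists (Cmul a c), (vscal a w). split; auto.
    rewrite (vscal_add_r HX), (vscal_mul HX). reflexivity.
Qed.

Lemma in_span_opp (l : list X) x : in_span l x -> in_span l (vopp x).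
Proof. rewrite <- (vscal_opp_1 HX). apply in_span_scal. Qed.

Lemma in_span_sub (l : list X) x y : in_span l x -> in_span l y -> in_span l (vsub x y).
Proof. intros Hx Hy. apply in_span_add; [exact Hx|apply in_span_opp, Hy]. Qed.

Lemma in_span_In (l : list X) v : In v l -> in_span l v.
Proof.
  induction l as [|a l IH]; simpl; [contradiction|]. intros [<-|H].
  - exists C1, vzero. split; [apply in_span_0|]. rewrite (vscal_1 HX), (vadd_0_r HX). reflexivity.
  - exists C0, v. split; auto. rewrite (vscal_0_l HX), (vadd_0_l HX). reflexivity.
Qed.

Lemma in_span_app_l (l l' : list X) y : in_span l y -> in_span (l ++ l') y.
Proof.
  revert y. induction l as [|v l IH]; simpl; intros y H.
  - subst. apply in_span_0.
  - destruct H as [c [w [Hw ->]]]. exists c, w. auto.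
Qed.

Lemma in_span_lincomb (l : list X) cs : in_span l (lincomb cs l).
Proof.
  revert cs. induction l as [|v l IH]; intros [|c cs]; try reflexivity.
  - apply in_span_0.
  - exists c, (lincomb cs l). split; auto.
Qed.

Lemma in_span_lincomb_inv (l : list X) y : in_span l y -> exists cs, y = lincomb cs l.
Proof.
  revert y. induction l as [|v l IH]; simpl; intros y H.
  - exists nil. subst. reflexivity.
  - destruct H as [c [w [Hw ->]]]. destruct (IH w Hw) as [cs ->]. exists (c :: cs). reflexivity.
Qed.

Lemma in_span_cons_redundant (l : list X) v y : in_span l v -> in_span (v :: l) y -> in_span l y.
Proof.
  intros Hv [c [w [Hw ->]]]. apply in_span_add; [apply in_span_scal|]; assumption.
Qed.

Lemma closed_dist_pos (W : X -> Prop) y :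
  is_closed W -> ~ W y -> exists d, 0 < d /\ forall w, W w -> d <= vnorm (vsub y w).
Proof.
  intros Hc Hy. apply NNPP. intro Hn.
  assert (Hex : forall n : nat, exists w, W w /\ vnorm (vsub y w) < / (INR n + 1)).
  { intro n. apply NNPP. intro Hn2. apply Hn. exists (/ (INR n + 1)). split.
    - apply Rinv_0_lt_compat. pose proof (pos_INR n). lra.
    - intros w Hw. apply Rnot_lt_le. intro Hlt. apply Hn2. exists w. auto. }
  destruct (choice _ Hex) as [u Hu].
  apply Hy, (Hc u); [intro n; apply Hu|].
  intros eps He. destruct (inv_INR_small eps He) as [N HN]. exists N. intros n HNn.
  rewrite (vnorm_sub_sym HX). specialize (HN n HNn). destruct (Hu n). lra.
Qed.

End Span.

Lemma lincomb_linear {X Y : NSpace} (HX : Banach X) (HY : Banach Y) (f : X -> Y) :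
  is_linear f -> forall (l : list X) cs, f (lincomb cs l) = lincomb cs (map f l).
Proof.
  intros Hf. induction l as [|v l IH]; intros [|c cs]; try apply (linear_0 HX HY f Hf).
  change (f (vadd (vscal c v) (lincomb cs l)) = vadd (vscal c (f v)) (lincomb cs (map f l))).
  rewrite (linear_add f Hf), (linear_scal f Hf), IH. reflexivity.
Qed.

Definition Csub (a b : C) : C := Cadd a (Copp b).

Definition Cinv (c : C) : C :=
  (fst c / (fst c ^ 2 + snd c ^ 2), - snd c / (fst c ^ 2 + snd c ^ 2)).

Lemma Cmul_inv_r (c : C) : c <> C0 -> Cmul c (Cinv c) = C1.
Proof.
  destruct c as [a b]; intro H. unfold Cmul, Cinv, C1, fst, snd.
  assert (Hp : a ^ 2 + b ^ 2 <> 0).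
  { intro E. apply H. unfold C0. f_equal; nra. }
  f_equal; field; exact Hp.
Qed.

Lemma Cmod_fst (c : C) : Rabs (fst c) <= Cmod c.
Proof.
  destruct c as [a b]. unfold Cmod, fst, snd. rewrite <- sqrt_Rsqr_abs.
  apply sqrt_le_1_alt. unfold Rsqr. nra.
Qed.

Lemma Cmod_snd (c : C) : Rabs (snd c) <= Cmod c.
Proof.
  destruct c as [a b]. unfold Cmod, fst, snd. rewrite <- sqrt_Rsqr_abs.
  apply sqrt_le_1_alt. unfold Rsqr. nra.
Qed.

Lemma Cmod_le_abs (c : C) : Cmod c <= Rabs (fst c) + Rabs (snd c).
Proof.
  destruct c as [a b]. unfold Cmod, fst, snd.
  pose proof (Rabs_pos a); pose proof (Rabs_pos b).
  rewrite <- (sqrt_Rsqr (Rabs a + Rabs b)) by lra.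
  apply sqrt_le_1_alt. unfold Rsqr.
  rewrite <- (pow2_abs a), <- (pow2_abs b). nra.
Qed.

Lemma C_cauchy_converges (c : nat -> C) :
  (forall eps, 0 < eps -> exists N, forall n m, (N <= n)%nat -> (N <= m)%nat ->
     Cmod (Csub (c n) (c m)) < eps) ->
  exists c0, forall eps, 0 < eps -> exists N, forall n, (N <= n)%nat -> Cmod (Csub (c n) c0) < eps.
Proof.
  intro Hc.
  assert (Hre : Cauchy_crit (fun n => fst (c n))).
  { intros eps He. destruct (Hc eps He) as [N HN]. exists N. intros n m Hn Hm.
    eapply Rle_lt_trans; [|apply (HN n m Hn Hm)]. apply (Cmod_fst (Csub (c n) (c m))). }
  assert (Him : Cauchy_crit (fun n => snd (c n))).
  { intros eps He. destruct (Hc eps He) as [N HN]. exists N. intros n m Hn Hm.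
    eapply Rle_lt_trans; [|apply (HN n m Hn Hm)]. apply (Cmod_snd (Csub (c n) (c m))). }
  destruct (R_complete _ Hre) as [a Ha]. destruct (R_complete _ Him) as [b Hb].
  exists (a, b). intros eps He.
  destruct (Ha (eps / 2)) as [N1 H1]; [lra|]. destruct (Hb (eps / 2)) as [N2 H2]; [lra|].
  exists (max N1 N2). intros n Hn.
  specialize (H1 n ltac:(lia)). specialize (H2 n ltac:(lia)). unfold Rdist in *.
  eapply Rle_lt_trans; [apply Cmod_le_abs|]. simpl.
  replace (fst (c n) + - a) with (fst (c n) - a) by ring.
  replace (snd (c n) + - b) with (snd (c n) - b) by ring. lra.
Qed.

Section SpanClosed.

Context {X : NSpace} (HX : Banach X).

Lemma vscal_Csub a b (v : X) : vscal (Csub a b) v = vsub (vscal a v) (vscal b v).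
Proof. unfold Csub, vsub. rewrite (vscal_add_l HX), (vscal_opp_l HX). reflexivity. Qed.

(* Dividing by [c] reduces this to the distance from [v] to [- w / c]. *)
Lemma span_cons_coef_bound (l : list X) v d :
  (forall w, in_span l w -> d <= vnorm (vsub v w)) ->
  forall c w, in_span l w -> Cmod c * d <= vnorm (vadd (vscal c v) w).
Proof.
  intros Hd c w Hw. destruct (classic (c = C0)) as [->|Hc].
  - rewrite Cmod_C0, Rmult_0_l. apply (vnorm_ge_0 HX).
  - replace (vadd (vscal c v) w) with (vscal c (vsub v (vopp (vscal (Cinv c) w)))).
    + rewrite (vnorm_scal HX). apply Rmult_le_compat_l; [apply Cmod_ge_0|].
      apply Hd, (in_span_opp HX), (in_span_scal HX), Hw.
    + rewrite (vscal_sub_r HX), (vscal_opp_r HX), <- (vscal_mul HX), Cmul_inv_r, (vscal_1 HX)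
        by exact Hc.
      abel HX.
Qed.

Lemma span_cons_closed (l : list X) v :
  is_closed (in_span l) -> ~ in_span l v -> is_closed (in_span (v :: l)).
Proof.
  intros Hl Hv u y Hu Hy.
  destruct (closed_dist_pos HX (in_span l) v Hl Hv) as [d [Hd0 Hd]].
  destruct (choice (fun n (p : C * X) => in_span l (snd p) /\ u n = vadd (vscal (fst p) v) (snd p)))
    as [cw Hcw].
  { intro n. destruct (Hu n) as [c [w Hw]]. exists (c, w). exact Hw. }
  set (c := fun n => fst (cw n)). set (w := fun n => snd (cw n)).
  assert (Hcoef : forall n m, Cmod (Csub (c n) (c m)) * d <= vnorm (vsub (u n) (u m))).
  { intros n m. replace (vsub (u n) (u m)) with (vadd (vscal (Csub (c n) (c m)) v) (vsub (w n) (w m))).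
    - apply (span_cons_coef_bound l v d Hd). apply (in_span_sub HX); apply Hcw.
    - rewrite vscal_Csub, (proj2 (Hcw n)), (proj2 (Hcw m)). unfold c, w. abel HX. }
  destruct (C_cauchy_converges c) as [c0 Hc0].
  { intros eps He. destruct (Hy (eps * d / 2)) as [N HN]; [nra|].
    exists N. intros n m Hn Hm. apply Rmult_lt_reg_r with d; auto.
    eapply Rle_lt_trans; [apply Hcoef|].
    replace (vsub (u n) (u m)) with (vsub (vsub (u n) y) (vsub (u m) y)) by abel HX.
    eapply Rle_lt_trans; [apply (vnorm_sub_le HX)|].
    pose proof (HN n Hn). pose proof (HN m Hm). lra. }
  assert (Hw : converges_to w (vsub y (vscal c0 v))).
  { intros eps He. pose proof (vnorm_ge_0 HX v).
    destruct (Hy (eps / 2)) as [N1 H1]; [lra|].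
    destruct (Hc0 (eps / (2 * (vnorm v + 1)))) as [N2 H2]; [apply Rdiv_lt_0_compat; lra|].
    exists (max N1 N2). intros n Hn.
    replace (vsub (w n) (vsub y (vscal c0 v))) with (vsub (vsub (u n) y) (vscal (Csub (c n) c0) v))
      by (rewrite vscal_Csub, (proj2 (Hcw n)); unfold c, w; abel HX).
    eapply Rle_lt_trans; [apply (vnorm_sub_le HX)|]. rewrite (vnorm_scal HX).
    specialize (H1 n ltac:(lia)). specialize (H2 n ltac:(lia)).
    pose proof (Cmod_ge_0 (Csub (c n) c0)).
    assert (Cmod (Csub (c n) c0) * vnorm v <= eps / (2 * (vnorm v + 1)) * (vnorm v + 1))
      by (apply Rmult_le_compat; lra).
    replace (eps / (2 * (vnorm v + 1)) * (vnorm v + 1)) with (eps / 2) in H3 by (field; lra).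
    lra. }
  exists c0, (vsub y (vscal c0 v)). split; [|abel HX].
  apply (Hl w); [intro n; apply Hcw|exact Hw].
Qed.

Lemma span_closed (l : list X) : is_closed (in_span l).
Proof.
  induction l as [|v l IH].
  - intros u y Hu Hy. simpl in *. symmetry. apply (vsub_eq_0 HX).
    apply Rle_antisym; [|apply (vnorm_ge_0 HX)]. apply Rnot_lt_le. intro H.
    destruct (Hy _ H) as [N HN]. specialize (HN N (le_n _)).
    rewrite (Hu N), (vnorm_sub_sym HX) in HN. lra.
  - destruct (classic (in_span l v)) as [Hv|Hv].
    + intros u y Hu Hy. exists C0, y. split.
      * apply (IH u); auto. intro n. apply (in_span_cons_redundant HX l v); auto.
      * rewrite (vscal_0_l HX), (vadd_0_l HX). reflexivity.
    + apply span_cons_closed; assumption.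
Qed.

End SpanClosed.

Section Riesz.

Context {X : NSpace} (HX : Banach X).

(* Normalise [y - w0], where [w0] nearly realises the distance [m] from [y]
   to the span: then every element of the span is at distance [>= m / |y - w0| > 1/2]. *)
Lemma riesz_lemma (l : list X) y : ~ in_span l y ->
  exists z, vnorm z <= 1 /\ forall w, in_span l w -> 1/2 <= vnorm (vsub z w).
Proof.
  intro Hy. destruct (closed_dist_pos HX (in_span l) y (span_closed HX l) Hy) as [d [Hd0 Hd]].
  set (E := fun r => forall w, in_span l w -> r <= vnorm (vsub y w)).
  destruct (completeness E) as [m [Hm1 Hm2]].
  { exists (vnorm (vsub y vzero)). intros r Hr. apply Hr, (in_span_0 HX). }
  { exists d. exact Hd. }
  assert (Hdm : d <= m) by (apply Hm1; exact Hd).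
  assert (Hmw : forall w, in_span l w -> m <= vnorm (vsub y w)).
  { intros w Hw. apply Hm2. intros r Hr. apply Hr, Hw. }
  assert (Hw0 : exists w0, in_span l w0 /\ vnorm (vsub y w0) < 2 * m).
  { apply NNPP. intro Hn. assert (H2m : E (2 * m)).
    { intros w Hw. apply Rnot_lt_le. intro Hlt. apply Hn. exists w. auto. }
    apply Hm1 in H2m. lra. }
  destruct Hw0 as [w0 [Hw0 Hlt]].
  set (rho := vnorm (vsub y w0)) in *.
  assert (Hrho : m <= rho) by (apply Hmw, Hw0).
  assert (Hrho_inv : 0 < / rho) by (apply Rinv_0_lt_compat; lra).
  exists (vscal (RtoC (/ rho)) (vsub y w0)). split.
  - rewrite (vnorm_scal_RtoC HX), Rabs_pos_eq by lra. fold rho. right. field. lra.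
  - intros w Hw.
    replace (vsub (vscal (RtoC (/ rho)) (vsub y w0)) w)
      with (vscal (RtoC (/ rho)) (vsub y (vadd w0 (vscal (RtoC rho) w)))).
    + rewrite (vnorm_scal_RtoC HX), Rabs_pos_eq by lra.
      assert (Hm : m <= vnorm (vsub y (vadd w0 (vscal (RtoC rho) w)))).
      { apply Hmw, (in_span_add HX); [exact Hw0|apply (in_span_scal HX), Hw]. }
      apply Rle_trans with (/ rho * m); [|apply Rmult_le_compat_l; lra].
      apply Rmult_le_reg_l with rho; [lra|].
      rewrite <- Rmult_assoc, Rinv_r, Rmult_1_l by lra. lra.
    + rewrite !(vscal_sub_r HX), (vscal_add_r HX), <- (vscal_mul HX), RtoC_mult, Rinv_l by lra.
      change (RtoC 1) with C1. rewrite (vscal_1 HX). abel HX.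
Qed.

Lemma riesz_sequence (l0 : list X) : infinite_dim X ->
  exists y : nat -> X, (forall n, vnorm (y n) <= 1) /\
    forall i j w, (i < j)%nat -> in_span l0 w -> 1/2 <= vnorm (vsub (y j) (vadd (y i) w)).
Proof.
  intro Hinf.
  assert (Hex : forall l : list X, exists z,
    vnorm z <= 1 /\ forall w, in_span l w -> 1/2 <= vnorm (vsub z w)).
  { intro l. destruct (classic (exists y, ~ in_span l y)) as [[y Hy]|Hn].
    - exact (riesz_lemma l y Hy).
    - exfalso. apply Hinf. exists l. split; [apply Forall_forall; auto|].
      intros x _. apply in_span_lincomb_inv. apply NNPP. intro H. apply Hn. exists x. exact H. }
  destruct (choice _ Hex) as [pick Hpick].
  set (pre := fix pre (k : nat) : list X :=
         match k with O => l0 | S k => pre k ++ pick (pre k) :: nil end).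
  exists (fun k => pick (pre k)). split; [intro n; apply Hpick|].
  assert (Hmono : forall i k x, in_span (pre i) x -> in_span (pre (i + k)%nat) x).
  { intros i k. induction k as [|k IHk]; intros x H.
    - rewrite Nat.add_0_r. exact H.
    - rewrite Nat.add_succ_r. apply (in_span_app_l HX), IHk, H. }
  intros i j w Hij Hw. apply Hpick.
  replace j with (S i + (j - S i))%nat by lia.
  apply (in_span_add HX); apply Hmono.
  - apply (in_span_In HX), in_or_app. right. left. reflexivity.
  - apply (Hmono O), Hw.
Qed.

End Riesz.

(** * Operators with closed range *)

Fixpoint vpartial_sum {X : NSpace} (x : nat -> X) (n : nat) : X :=
  match n with O => vzero | S n => vadd (vpartial_sum x n) (x n) end.

Section Series.

Context {X : NSpace} (HX : Banach X).

Lemma nested_balls_dist (z : nat -> X) (r : nat -> R) :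
  (forall k, 0 < r k) -> (forall k, r (S k) <= r k / 2) ->
  (forall k, vnorm (vsub (z (S k)) (z k)) < r k / 2) ->
  forall k n, (k <= n)%nat -> vnorm (vsub (z n) (z k)) <= r k.
Proof.
  intros Hpos Hhalf Hclose.
  assert (Hnest : forall k j, vnorm (vsub (z (k + j)%nat) (z k)) + r (k + j)%nat <= r k).
  { intros k j. induction j as [|j IHj].
    - rewrite Nat.add_0_r, (vsub_diag HX), (vnorm_0 HX). lra.
    - rewrite Nat.add_succ_r. pose proof (vnorm_sub_triangle HX (z (S (k + j))) (z (k + j)%nat) (z k)).
      specialize (Hclose (k + j)%nat). specialize (Hhalf (k + j)%nat). lra. }
  intros k n Hkn. replace n with (k + (n - k))%nat by lia.
  specialize (Hnest k (n - k)%nat). specialize (Hpos (k + (n - k))%nat). lra.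
Qed.

Lemma cauchy_of_dist_bound (z : nat -> X) (a : R) :
  (forall k n, (k <= n)%nat -> vnorm (vsub (z n) (z k)) <= a * (/2) ^ k) -> cauchy z.
Proof.
  intros Hz eps He.
  destruct (pow_half_small (eps / (2 * (Rabs a + 1)))) as [N HN].
  { apply Rdiv_lt_0_compat; [lra|]. pose proof (Rabs_pos a). lra. }
  exists N. intros n m Hn Hm.
  pose proof (vnorm_sub_triangle HX (z n) (z N) (z m)) as Htri.
  rewrite (vnorm_sub_sym HX (z N) (z m)) in Htri.
  specialize (Hz N n Hn) as Hn'. specialize (Hz N m Hm) as Hm'. specialize (HN N (le_n _)).
  pose proof (pow_lt (/2) N ltac:(lra)). pose proof (Rabs_pos a). pose proof (RRle_abs a).
  assert (Hq : 2 * (Rabs a + 1) * (/2) ^ N < eps).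
  { apply Rmult_lt_reg_r with (/ (2 * (Rabs a + 1))); [apply Rinv_0_lt_compat; lra|].
    rewrite Rmult_comm, <- Rmult_assoc, Rinv_l by lra. lra. }
  nra.
Qed.

Lemma geometric_series_converges (x : nat -> X) (a : R) :
  (forall m, vnorm (x m) <= a * (/2) ^ m) ->
  exists l, converges_to (vpartial_sum x) l /\ vnorm l <= 2 * a.
Proof.
  intro Hx.
  assert (Hsb : forall N j, vnorm (vsub (vpartial_sum x (N + j)) (vpartial_sum x N))
                            <= 2 * a * (/2) ^ N - 2 * a * (/2) ^ (N + j)).
  { intros N j. induction j as [|j IHj].
    - rewrite Nat.add_0_r, (vsub_diag HX), (vnorm_0 HX). lra.
    - rewrite Nat.add_succ_r. simpl vpartial_sum.
      replace (vsub (vadd (vpartial_sum x (N + j)) (x (N + j)%nat)) (vpartial_sum x N))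
        with (vadd (vsub (vpartial_sum x (N + j)) (vpartial_sum x N)) (x (N + j)%nat)) by abel HX.
      eapply Rle_trans; [apply (vnorm_triangle HX)|].
      specialize (Hx (N + j)%nat). simpl pow. lra. }
  assert (Ha : 0 <= a) by (pose proof (Hx O); pose proof (vnorm_ge_0 HX (x O)); simpl in *; lra).
  assert (Hdist : forall N n, (N <= n)%nat ->
            vnorm (vsub (vpartial_sum x n) (vpartial_sum x N)) <= 2 * a * (/2) ^ N).
  { intros N n Hle. replace n with (N + (n - N))%nat by lia. specialize (Hsb N (n - N)%nat).
    pose proof (pow_le (/2) (N + (n - N)) ltac:(lra)). nra. }
  destruct (banach_complete HX _ (cauchy_of_dist_bound _ (2 * a) Hdist)) as [l Hl].
  exists l. split; [exact Hl|].
  apply (limit_norm_le HX (vpartial_sum x)); [|exact Hl]. intro n.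
  specialize (Hdist O n (Nat.le_0_l n)). simpl in Hdist.
  replace (vsub (vpartial_sum x n) vzero) with (vpartial_sum x n) in Hdist by abel HX. lra.
Qed.

End Series.

Section ClosedRange.

Context {X Y : NSpace} (HX : Banach X) (HY : Banach Y).
Context (V : X -> Y) (hV : bop V) (hcl : closed_range V).

Let in_range (z : Y) : Prop := exists x, V x = z.

Lemma nested_range_balls (z : nat -> Y) (r : nat -> R) :
  (forall k, in_range (z k)) -> (forall k, 0 < r k) -> r O <= 1 ->
  (forall k, r (S k) <= r k / 2) -> (forall k, vnorm (vsub (z (S k)) (z k)) < r k / 2) ->
  exists x, forall k, vnorm (vsub (V x) (z k)) <= r k.
Proof.
  intros Hz Hpos Hr0 Hhalf Hclose.
  pose proof (nested_balls_dist HY z r Hpos Hhalf Hclose) as Hdist.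
  assert (Hgeom : forall k, r k <= (/2) ^ k).
  { induction k as [|k IHk]; simpl; [exact Hr0|]. specialize (Hhalf k). lra. }
  destruct (banach_complete HY z) as [zl Hzl].
  { apply (cauchy_of_dist_bound HY z 1). intros k n Hkn.
    specialize (Hdist k n Hkn). specialize (Hgeom k). lra. }
  destruct (choice (fun n x => V x = z n) Hz) as [u Hu].
  destruct (hcl u zl) as [x Hx].
  { intros eps He. destruct (Hzl eps He) as [N HN]. exists N. intros n Hn. rewrite Hu. auto. }
  exists x. intro k. rewrite Hx. exact (limit_dist_le HY z zl _ _ _ (Hdist k) Hzl).
Qed.

(* Baire category argument in the complete space [in_range]: were no closure of
   [V (ball 0 k)] to contain a ball of the range, a nested sequence of balls of the
   range avoiding the k-th one at step k would converge to a point of the range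
   lying in none of them. *)
Lemma closed_range_ball_approx :
  exists (k : nat) z0 r, 0 < r /\ in_range z0 /\
    forall z, in_range z -> vnorm (vsub z z0) < r ->
      forall eps, 0 < eps -> exists x, vnorm x <= INR k /\ vnorm (vsub (V x) z) < eps.
Proof.
  apply NNPP. intro Hn.
  assert (Hstep : forall kp : nat * (Y * R), exists q : Y * R,
    0 < snd (snd kp) -> in_range (fst (snd kp)) ->
      in_range (fst q) /\ 0 < snd q /\ vnorm (vsub (fst q) (fst (snd kp))) < snd (snd kp) / 2 /\
      snd q <= snd (snd kp) / 2 /\
      forall x, vnorm x <= INR (fst kp) -> 2 * snd q <= vnorm (vsub (V x) (fst q))).
  { intros [k [z0 r]]. simpl. apply NNPP. intro Hq.
    apply Hn. exists k, z0, (r / 2). split; [|split].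
    - apply NNPP. intro Hr. apply Hq. exists (z0, r). intro. lra.
    - apply NNPP. intro Hz0. apply Hq. exists (z0, r). intros _ H. contradiction.
    - intros z Hz Hzz eps Heps. apply NNPP. intro Hx. apply Hq.
      exists (z, Rmin (eps / 2) (r / 2)). intros Hr _. simpl.
      split; [exact Hz|]. split; [apply Rmin_glb_lt; lra|].
      split; [exact Hzz|]. split; [apply Rmin_r|].
      intros x Hxk. apply Rnot_lt_le. intro Hlt. apply Hx. exists x. split; [exact Hxk|].
      pose proof (Rmin_l (eps / 2) (r / 2)). lra. }
  destruct (choice _ Hstep) as [step Hstep'].
  set (st := fix st (k : nat) : Y * R := match k with O => (vzero, 1) | S k => step (k, st k) end).
  set (z := fun k => fst (st k)). set (r := fun k => snd (st k)).
  assert (Hinv : forall k, in_range (z k) /\ 0 < r k).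
  { induction k as [|k [Hz Hr]].
    - split; [exists vzero; apply (linear_0 HX HY V (proj1 hV))|unfold r; simpl; lra].
    - destruct (Hstep' (k, st k) Hr Hz) as (? & ? & _). split; assumption. }
  assert (Hnext : forall k, vnorm (vsub (z (S k)) (z k)) < r k / 2 /\ r (S k) <= r k / 2 /\
            forall x, vnorm x <= INR k -> 2 * r (S k) <= vnorm (vsub (V x) (z (S k)))).
  { intro k. destruct (Hinv k) as [Hz Hr]. exact (proj2 (proj2 (Hstep' (k, st k) Hr Hz))). }
  destruct (nested_range_balls z r (fun k => proj1 (Hinv k)) (fun k => proj2 (Hinv k))
              ltac:(unfold r; simpl; lra) (fun k => proj1 (proj2 (Hnext k))) (fun k => proj1 (Hnext k)))
    as [x Hx].
  destruct (INR_unbounded (vnorm x)) as [k Hk].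
  pose proof (proj2 (proj2 (Hnext k)) x (Rlt_le _ _ Hk)).
  pose proof (Hx (S k)). pose proof (proj2 (Hinv (S k))). lra.
Qed.

Lemma closed_range_ball0_approx :
  exists m r, 0 <= m /\ 0 < r /\ forall z, in_range z -> vnorm z < r ->
    forall eps, 0 < eps -> exists x, vnorm x <= m /\ vnorm (vsub (V x) z) < eps.
Proof.
  pose proof (proj1 hV) as hL.
  destruct closed_range_ball_approx as [k [z0 [r [Hr [[x0 Hx0] Hb]]]]].
  exists (2 * INR k), r. split; [pose proof (pos_INR k); lra|]. split; [exact Hr|].
  intros z [xz Hxz] Hz eps He.
  destruct (Hb (vadd z0 z)) with (eps := eps / 2) as [x1 [Hx1 Hv1]].
  { exists (vadd x0 xz). rewrite (linear_add V hL). congruence. }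
  { replace (vsub (vadd z0 z) z0) with z by abel HY. exact Hz. }
  { lra. }
  destruct (Hb z0) with (eps := eps / 2) as [x2 [Hx2 Hv2]].
  { exists x0. exact Hx0. }
  { rewrite (vsub_diag HY), (vnorm_0 HY). exact Hr. }
  { lra. }
  exists (vsub x1 x2). split.
  - pose proof (vnorm_sub_le HX x1 x2). lra.
  - rewrite (linear_sub HX HY V hL).
    replace (vsub (vsub (V x1) (V x2)) z) with (vsub (vsub (V x1) (vadd z0 z)) (vsub (V x2) z0))
      by abel HY.
    pose proof (vnorm_sub_le HY (vsub (V x1) (vadd z0 z)) (vsub (V x2) z0)). lra.
Qed.

Lemma closed_range_approx :
  exists c, 0 <= c /\ forall z, in_range z -> forall eps, 0 < eps ->
    exists x, vnorm x <= c * vnorm z /\ vnorm (vsub (V x) z) < eps.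
Proof.
  pose proof (proj1 hV) as hL.
  destruct closed_range_ball0_approx as [m [r [Hm [Hr Hball]]]].
  exists (2 * m / r). split; [apply Rmult_le_pos; [lra|]; left; apply Rinv_0_lt_compat, Hr|].
  intros z [xz Hxz] eps He.
  destruct (Req_dec (vnorm z) 0) as [Ez|Ez].
  { apply (vnorm_eq_0 HY) in Ez. rewrite Ez. exists vzero.
    rewrite (vnorm_0 HX), (vnorm_0 HY), (linear_0 HX HY V hL), (vsub_diag HY), (vnorm_0 HY). lra. }
  pose proof (vnorm_ge_0 HY z).
  set (t := r / (2 * vnorm z)).
  assert (Ht : 0 < t) by (unfold t; apply Rdiv_lt_0_compat; lra).
  destruct (Hball (vscal (RtoC t) z)) with (eps := eps * t) as [x' [Hx' Hv']].
  { exists (vscal (RtoC t) xz). rewrite (linear_scal V hL). congruence. }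
  { rewrite (vnorm_scal_RtoC HY), Rabs_pos_eq by lra. unfold t. field_simplify; lra. }
  { apply Rmult_lt_0_compat; lra. }
  assert (Hinvt : 0 < / t) by (apply Rinv_0_lt_compat; lra).
  exists (vscal (RtoC (/ t)) x'). split.
  - rewrite (vnorm_scal_RtoC HX), Rabs_pos_eq by lra.
    apply Rle_trans with (/ t * m); [apply Rmult_le_compat_l; lra|].
    right. unfold t. field. lra.
  - rewrite (linear_scal V hL).
    replace (vsub (vscal (RtoC (/ t)) (V x')) z) with (vscal (RtoC (/ t)) (vsub (V x') (vscal (RtoC t) z))).
    + rewrite (vnorm_scal_RtoC HY), Rabs_pos_eq by lra.
      apply Rlt_le_trans with (/ t * (eps * t)); [apply Rmult_lt_compat_l; lra|].
      right. field. lra.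
    + rewrite (vscal_sub_r HY), <- (vscal_mul HY), RtoC_mult, Rinv_l by lra.
      change (RtoC 1) with C1. rewrite (vscal_1 HY). reflexivity.
Qed.

(* Each term corrects the remaining error of the previous partial sum. *)
Lemma range_correction_sequence (c : R) :
  0 <= c -> (forall z, in_range z -> forall eps, 0 < eps ->
               exists x, vnorm x <= c * vnorm z /\ vnorm (vsub (V x) z) < eps) ->
  forall z, in_range z -> 0 < vnorm z -> exists xs : nat -> X,
    (forall m, vnorm (xs m) <= c * vnorm z * (/2) ^ m) /\
    (forall N, vnorm (vsub (V (vpartial_sum xs N)) z) <= vnorm z * (/2) ^ N).
Proof.
  pose proof (proj1 hV) as hL. intros Hc0 Hc z Hz Hz0.
  destruct (choice (fun (mw : nat * Y) x => in_range (snd mw) ->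
              vnorm x <= c * vnorm (snd mw) /\ vnorm (vsub (V x) (snd mw)) < vnorm z * (/2) ^ S (fst mw)))
    as [pick Hpick].
  { intros [m w]. destruct (classic (in_range w)) as [Hw|Hw].
    - destruct (Hc w Hw (vnorm z * (/2) ^ S m)) as [x Hx].
      + apply Rmult_lt_0_compat; [exact Hz0|apply pow_lt; lra].
      + exists x. intros _. exact Hx.
    - exists vzero. intro. contradiction. }
  set (rem := fix rem (m : nat) : Y := match m with O => z | S m => vsub (rem m) (V (pick (m, rem m))) end).
  set (xs := fun m => pick (m, rem m)).
  assert (Hrem : forall m, in_range (rem m)).
  { induction m as [|m [a Ha]]; [exact Hz|].
    exists (vsub a (xs m)). rewrite (linear_sub HX HY V hL), Ha. reflexivity. }
  assert (Hremb : forall m, vnorm (rem m) <= vnorm z * (/2) ^ m).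
  { intros [|m]; [simpl; lra|].
    change (rem (S m)) with (vsub (rem m) (V (xs m))).
    rewrite (vnorm_sub_sym HY). left. apply (Hpick (m, rem m)), Hrem. }
  assert (HVs : forall N, V (vpartial_sum xs N) = vsub z (rem N)).
  { induction N as [|N IHN]; simpl.
    - rewrite (linear_0 HX HY V hL). abel HY.
    - rewrite (linear_add V hL), IHN. fold (xs N). abel HY. }
  exists xs. split.
  - intro m. eapply Rle_trans; [apply (Hpick (m, rem m)), Hrem|].
    rewrite Rmult_assoc. apply Rmult_le_compat_l; [exact Hc0|apply Hremb].
  - intro N. rewrite HVs. replace (vsub (vsub z (rem N)) z) with (vopp (rem N)) by abel HY.
    rewrite (vnorm_opp HY). apply Hremb.
Qed.

Lemma closed_range_bounded_preimage :
  exists c, 0 <= c /\ forall x0, exists x, V x = V x0 /\ vnorm x <= c * vnorm (V x0).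
Proof.
  destruct closed_range_approx as [c [Hc0 Hc]].
  exists (2 * c). split; [lra|]. intro x0.
  pose proof (vnorm_ge_0 HY (V x0)) as Hz0.
  destruct (Rle_lt_or_eq_dec _ _ Hz0) as [Hz|Hz].
  2:{ exists vzero. rewrite <- Hz, (vnorm_0 HX), (linear_0 HX HY V (proj1 hV)).
      split; [symmetry; apply (vnorm_eq_0 HY); auto|lra]. }
  destruct (range_correction_sequence c Hc0 Hc (V x0) (ex_intro _ x0 eq_refl) Hz) as [xs [Hxs Herr]].
  destruct (geometric_series_converges HX xs (c * vnorm (V x0)) Hxs) as [x [Hx Hxn]].
  exists x. split; [|lra].
  apply (limit_unique HY (fun N => V (vpartial_sum xs N))).
  - apply (bop_continuous HX HY V _ x hV Hx).
  - intros eps He. destruct (pow_half_small (eps / vnorm (V x0))) as [N HN]; [apply Rdiv_lt_0_compat; lra|].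
    exists N. intros n Hn. eapply Rle_lt_trans; [apply Herr|].
    specialize (HN n Hn). apply Rmult_lt_reg_r with (/ vnorm (V x0)); [apply Rinv_0_lt_compat; lra|].
    rewrite Rmult_comm, <- Rmult_assoc, Rinv_l by lra. lra.
Qed.

End ClosedRange.

(** * Factorization modulo a compact operator *)

Section DirectSum.

Context {X X' : NSpace} (HX : Banach X) (HX' : Banach X').

Lemma dsum_vnorm_ge_0 (p : dsum X X') : 0 <= vnorm p.
Proof. apply sqrt_pos. Qed.

Lemma dsum_inl_bop : bop (fun x : X => ((x, @vzero X') : dsum X X')).
Proof.
  split; [split|].
  - intros x y. simpl. rewrite (vadd_0_r HX'). reflexivity.
  - intros a x. simpl. rewrite (vscal_0_r HX'). reflexivity.
  - exists 1. intro x. cbn [vnorm dsum fst snd]. rewrite (vnorm_0 HX').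
    replace (vnorm x ^ 2 + 0 ^ 2) with (vnorm x ^ 2) by ring.
    rewrite sqrt_pow2 by apply (vnorm_ge_0 HX). lra.
Qed.

Lemma dsum_inr_bop : bop (fun x' : X' => ((@vzero X, x') : dsum X X')).
Proof.
  split; [split|].
  - intros x y. simpl. rewrite (vadd_0_r HX). reflexivity.
  - intros a x. simpl. rewrite (vscal_0_r HX). reflexivity.
  - exists 1. intro x. cbn [vnorm dsum fst snd]. rewrite (vnorm_0 HX).
    replace (0 ^ 2 + vnorm x ^ 2) with (vnorm x ^ 2) by ring.
    rewrite sqrt_pow2 by apply (vnorm_ge_0 HX'). lra.
Qed.

Lemma dsum_fst_bop : bop (fun p : dsum X X' => fst p).
Proof.
  split; [split; reflexivity|].
  exists 1. intros [x x']. cbn [vnorm dsum fst snd]. rewrite Rmult_1_l.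
  rewrite <- (sqrt_pow2 (vnorm x)) at 1 by apply (vnorm_ge_0 HX).
  apply sqrt_le_1_alt. pose proof (pow2_ge_0 (vnorm x')). lra.
Qed.

Lemma dsum_snd_bop : bop (fun p : dsum X X' => snd p).
Proof.
  split; [split; reflexivity|].
  exists 1. intros [x x']. cbn [vnorm dsum fst snd]. rewrite Rmult_1_l.
  rewrite <- (sqrt_pow2 (vnorm x')) at 1 by apply (vnorm_ge_0 HX').
  apply sqrt_le_1_alt. pose proof (pow2_ge_0 (vnorm x)). lra.
Qed.

End DirectSum.

(* Evaluating [diag T 1 = E (diag S 1) F] at [F^-1 (y, 0)] and reading off the
   first component of [F] gives [id_Y = A B + L S]. *)
Lemma equiv_after_ext_factor {X Y : NSpace} (HX : Banach X) (HY : Banach Y)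
  (T : X -> X) (S : Y -> Y) :
  equiv_after_ext T S ->
  exists (A : X -> Y) (B : Y -> X) (L : Y -> Y),
    bop A /\ bop B /\ bop L /\ forall y, y = vadd (A (B y)) (L (S y)).
Proof.
  intros [X' [Y' [HX' [HY' [E [F [[hE _] [[hF [H [hH [FH _]]]] Hid]]]]]]]].
  exists (fun x => fst (F ((x, vzero) : dsum X X'))),
         (fun y => fst (H ((y, vzero) : dsum Y Y'))),
         (fun w => fst (F ((vzero, snd (E ((w, vzero) : dsum Y Y'))) : dsum X X'))).
  split; [|split; [|split]].
  - apply (bop_comp _ _ dsum_vnorm_ge_0); [|apply (dsum_fst_bop HY)].
    apply (bop_comp _ _ dsum_vnorm_ge_0); [apply (dsum_inl_bop HX HX')|exact hF].
  - apply (bop_comp _ _ dsum_vnorm_ge_0); [|apply (dsum_fst_bop HX)].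
    apply (bop_comp _ _ dsum_vnorm_ge_0); [apply (dsum_inl_bop HY HY')|exact hH].
  - apply (bop_comp _ _ dsum_vnorm_ge_0); [|apply (dsum_fst_bop HY)].
    apply (bop_comp (fun w => snd (E ((w, vzero) : dsum Y Y')))
             (fun x' => F ((vzero, x') : dsum X X')) (vnorm_ge_0 HX')).
    + apply (bop_comp _ _ dsum_vnorm_ge_0); [|apply (dsum_snd_bop HX')].
      apply (bop_comp _ _ dsum_vnorm_ge_0); [apply (dsum_inl_bop HY HY')|exact hE].
    + apply (bop_comp _ _ dsum_vnorm_ge_0); [apply (dsum_inr_bop HX HX')|exact hF].
  - intro y. set (p := H ((y, vzero) : dsum Y Y')).
    assert (Fp : F p = (y, vzero)) by apply FH.
    assert (Hsnd : snd p = snd (E ((S y, vzero) : dsum Y Y'))).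
    { pose proof (Hid p) as Hp. rewrite Fp in Hp. apply (f_equal snd) in Hp. exact Hp. }
    assert (Hsplit : p = vadd ((fst p, vzero) : dsum X X') ((vzero, snd p) : dsum X X')).
    { destruct p as [p1 p2]. simpl. rewrite (vadd_0_r HX), (vadd_0_l HX'). reflexivity. }
    transitivity (fst (F (vadd ((fst p, vzero) : dsum X X') ((vzero, snd p) : dsum X X')))).
    { rewrite <- Hsplit, Fp. reflexivity. }
    rewrite (linear_add F (proj1 hF)), <- Hsnd. reflexivity.
Qed.

Lemma compact_comp_l {Y Z : NSpace} (HY : Banach Y) (HZ : Banach Z) (L : Y -> Z) (S : Y -> Y) :
  bop L -> compact_op S -> compact_op (fun y => L (S y)).
Proof.
  intros hL [hS HS]. split; [exact (bop_comp S L (vnorm_ge_0 HY) hS hL)|].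
  intros u Hu. destruct (HS u Hu) as [phi [l [Hphi Hl]]].
  exists phi, (L l). split; [exact Hphi|]. exact (bop_continuous HY HZ L _ l hL Hl).
Qed.

Section CompactFactorization.

Context {X Y : NSpace} (HX : Banach X) (HY : Banach Y).
Context (A : X -> Y) (B : Y -> X) (K : Y -> Y).
Hypotheses (hA : bop A) (hB : bop B) (hK : compact_op K).
Hypothesis Hdec : forall y, y = vadd (A (B y)) (K y).

Let V (x : X) : X := vsub x (B (A x)).

(* [V (B y) = B (K y)], so [B y] has a small [V]-preimage [x'] up to [ker V];
   then [y = A (B y - x') + (A x' + K y)]. *)
Lemma dist_to_kernel_image_le (ws : list X) :
  bop V -> closed_range V -> (forall x, V x = vzero -> exists cs, x = lincomb cs ws) ->
  exists M, 0 < M /\ forall y, exists w, in_span (map A ws) w /\ vnorm (vsub y w) <= M * vnorm (K y).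
Proof.
  intros hV hcl Hker.
  destruct (closed_range_bounded_preimage HX HX V hV hcl) as [c [Hc0 Hc]].
  destruct (bop_bound HX A hA) as [MA [HMA0 HMA]].
  destruct (bop_bound HY B hB) as [MB [HMB0 HMB]].
  exists (MA * c * MB + 1). split; [pose proof (Rmult_le_pos _ _ (Rmult_le_pos _ _ HMA0 Hc0) HMB0); lra|].
  intro y. destruct (Hc (B y)) as [x' [Hx'V Hx'n]].
  assert (HVB : V (B y) = B (K y)).
  { unfold V. rewrite <- (linear_sub HY HX B (proj1 hB)). f_equal.
    rewrite (Hdec y) at 1. abel HY. }
  destruct (Hker (vsub (B y) x')) as [cs Hcs].
  { rewrite (linear_sub HX HX V (proj1 hV)), Hx'V. apply (vsub_diag HX). }
  exists (A (vsub (B y) x')). split.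
  { rewrite Hcs, (lincomb_linear HX HY A (proj1 hA)). apply (in_span_lincomb HY). }
  replace (vsub y (A (vsub (B y) x'))) with (vadd (A x') (K y)).
  2:{ rewrite (linear_sub HX HY A (proj1 hA)). rewrite (Hdec y) at 2. abel HY. }
  eapply Rle_trans; [apply (vnorm_triangle HY)|].
  rewrite HVB in Hx'n.
  assert (vnorm (A x') <= MA * c * MB * vnorm (K y)).
  { eapply Rle_trans; [apply HMA|]. rewrite !Rmult_assoc. apply Rmult_le_compat_l; [exact HMA0|].
    eapply Rle_trans; [exact Hx'n|]. apply Rmult_le_compat_l; [exact Hc0|apply HMB]. }
  lra.
Qed.

Lemma compact_factorization_not_fredholm : infinite_dim Y -> ~ fredholm V.
Proof.
  intros Hinf [hV [[ws [_ Hker]] [hcl _]]].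
  destruct (dist_to_kernel_image_le ws hV hcl Hker) as [M [HM HMK]].
  destruct (riesz_sequence HY (map A ws) Hinf) as [y [Hy1 Hy2]].
  destruct (proj2 hK y) as [phi [l [Hphi Hl]]]; [exists 1; exact Hy1|].
  destruct (Hl (/ (4 * M))) as [N HN]; [apply Rinv_0_lt_compat; lra|].
  set (i := phi N). set (j := phi (S N)).
  destruct (HMK (vsub (y j) (y i))) as [w [Hw Hdist]].
  pose proof (Hy2 i j w (Hphi N) Hw) as Hsep.
  replace (vsub (y j) (vadd (y i) w)) with (vsub (vsub (y j) (y i)) w) in Hsep by abel HY.
  rewrite (linear_sub HY HY K (proj1 (proj1 hK))) in Hdist.
  pose proof (vnorm_sub_triangle HY (K (y j)) l (K (y i))) as Htri.
  rewrite (vnorm_sub_sym HY l) in Htri.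
  pose proof (HN (S N) (Nat.le_succ_diag_r N)) as HNj. pose proof (HN N (le_n N)) as HNi.
  simpl in HNi, HNj. fold i j in HNi, HNj.
  assert (Hsmall : M * vnorm (vsub (K (y j)) (K (y i))) < M * / (2 * M)).
  { apply Rmult_lt_compat_l; [exact HM|].
    replace (/ (2 * M)) with (/ (4 * M) + / (4 * M)) by (field; lra). lra. }
  replace (M * / (2 * M)) with (1 / 2) in Hsmall by (field; lra). lra.
Qed.

End CompactFactorization.

Theorem theorem5p2 (X Y : NSpace) :
  Banach X -> Banach Y -> infinite_dim X -> infinite_dim Y ->
  ess_incomparable X Y ->
  forall (S : Y -> Y) (T : X -> X),
    compact_op S -> bop T -> ~ equiv_after_ext T S.
Proof.
  intros HX HY _ HinfY Hess S T HS _ Hequiv.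
  destruct (equiv_after_ext_factor HX HY T S Hequiv) as (A & B & L & hA & hB & hL & Hdec).
  destruct (Hess A hA) as [_ Hfredholm].
  exact (compact_factorization_not_fredholm HX HY A B (fun y => L (S y)) hA hB
           (compact_comp_l HY HY L S hL HS) Hdec HinfY (Hfredholm B hB)).
Qed.
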